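(* Let $H$ and $G$ be groups. The relation $\approx_2$ is an equivalence relation on $\mathrm{Crossed}(H,G)$; two normalized crossed systems $(\alpha,f)$, $(\alpha',f')$ satisfy $(\alpha,f)\approx_2(\alpha',f')$ if and only if they are isomorphic objects of $\mathcal{E}_2(H,G)$. Consequently there is a bijection between the set of objects of a skeleton of $\mathcal{E}_2(H,G)$ (i.e. the set of isomorphism classes of objects of $\mathcal{E}_2(H,G)$) and the quotient set $\mathrm{Crossed}(H,G)/\!\approx_2$.
   Context: For groups $H,G$ and a map $\alpha:G\to\mathrm{Aut}(H)$ write $g\triangleright h:=\alpha(g)(h)$ (and $g\triangleright' h:=\alpha'(g)(h)$). A normalized crossed system is a quadruple $(H,G,\alpha,f)$ with maps $\alpha:G\to\mathrm{Aut}(H)$, $f:G\times G\to H$, $f(1,1)=1$, such that for all $g_1,g_2,g_3\in G$, $h\in H$: (WA) $g_1\triangleright(g_2\triangleright h)=f(g_1,g_2)\big((g_1g_2)\triangleright h\big)f(g_1,g_2)^{-1}$ and (CC) $f(g_1,g_2)f(g_1g_2,g_3)=\big(g_1\triangleright f(g_2,g_3)\big)f(g_1,g_2g_3)$. $\mathrm{Crossed}(H,G)$ denotes the set of pairs $(\alpha,f)$ such that $(H,G,\alpha,f)$ is a normalized crossed system. The crossed product $H\#_\alpha^f G$ is the group on the set $H\times G$ with multiplication $(h_1,g_1)\cdot(h_2,g_2)=\big(h_1(g_1\triangleright h_2)f(g_1,g_2),g_1g_2\big)$ and unit $(1,1)$; let $i_H(h)=(h,1)$, $\pi_G(h,g)=g$.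 The category $\mathcal{E}_2(H,G)$ has object set $\mathrm{Crossed}(H,G)$, and a morphism $(\alpha,f)\to(\alpha',f')$ is a triple $(\eta,\psi,\gamma)$ of group homomorphisms $\eta:H\to H$, $\psi:H\#_\alpha^f G\to H\#_{\alpha'}^{f'}G$, $\gamma:G\to G$ with $\psi\circ i_H=i'_H\circ\eta$ and $\pi'_G\circ\psi=\gamma\circ\pi_G$; composition is componentwise. Define $(\alpha,f)\approx_2(\alpha',f')$ if there exist group isomorphisms $\eta:H\to H$, $\gamma:G\to G$ and a map $t:G\to H$ such that for all $h\in H$, $g,g_1,g_2\in G$: $g\triangleright' h=\eta\big(t(g)(\gamma^{-1}(g)\triangleright\eta^{-1}(h))t(g)^{-1}\big)$ and $f'(g_1,g_2)=\eta\big(t(g_1)(\gamma^{-1}(g_1)\triangleright t(g_2))f(\gamma^{-1}(g_1),\gamma^{-1}(g_2))t(g_1g_2)^{-1}\big)$. *)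

From Stdlib Require Import RelationClasses.

Record Group := {
  carrier :> Type;
  gmul : carrier -> carrier -> carrier;
  gone : carrier;
  ginv : carrier -> carrier;
  gmulA : forall x y z, gmul x (gmul y z) = gmul (gmul x y) z;
  gmul1l : forall x, gmul gone x = x;
  gmul1r : forall x, gmul x gone = x;
  gmulVl : forall x, gmul (ginv x) x = gone;
  gmulVr : forall x, gmul x (ginv x) = gone
}.

Arguments gmul {_}. Arguments gone {_}. Arguments ginv {_}.

Definition is_hom (A B : Group) (phi : A -> B) : Prop :=
  forall x y, phi (gmul x y) = gmul (phi x) (phi y).

Definition is_aut (H : Group) (a : H -> H) : Prop :=
  is_hom H H a /\ (exists b : H -> H, (forall x, b (a x) = x) /\ (forall x, a (b x) = x)).

Definition is_crossed (H G : Group) (alpha : G -> H -> H) (f : G -> G -> H) : Prop :=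
  (forall g, is_aut H (alpha g)) /\
  f gone gone = gone /\
  (forall g1 g2 h, alpha g1 (alpha g2 h) =
      gmul (gmul (f g1 g2) (alpha (gmul g1 g2) h)) (ginv (f g1 g2))) /\
  (forall g1 g2 g3, gmul (f g1 g2) (f (gmul g1 g2) g3) =
      gmul (alpha g1 (f g2 g3)) (f g1 (gmul g2 g3))).

Definition Crossed (H G : Group) : Type :=
  { p : (G -> H -> H) * (G -> G -> H) | is_crossed H G (fst p) (snd p) }.

Definition cr_alpha {H G} (c : Crossed H G) : G -> H -> H := fst (proj1_sig c).
Definition cr_f {H G} (c : Crossed H G) : G -> G -> H := snd (proj1_sig c).

Definition cp_mul {H G : Group} (c : Crossed H G) (x y : H * G) : H * G :=
  let (h1, g1) := x in let (h2, g2) := y in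
  (gmul (gmul h1 (cr_alpha c g1 h2)) (cr_f c g1 g2), gmul g1 g2).

Definition E2_mor {H G : Group} (c c' : Crossed H G)
  (eta : H -> H) (psi : H * G -> H * G) (gamma : G -> G) : Prop :=
  is_hom H H eta /\ is_hom G G gamma /\
  (forall x y, psi (cp_mul c x y) = cp_mul c' (psi x) (psi y)) /\
  (forall h, psi (h, gone) = (eta h, gone)) /\
  (forall x, snd (psi x) = gamma (snd x)).

Definition E2_iso {H G : Group} (c c' : Crossed H G) : Prop :=
  exists (eta : H -> H) (psi : H * G -> H * G) (gamma : G -> G)
         (eta' : H -> H) (psi' : H * G -> H * G) (gamma' : G -> G),
    E2_mor c c' eta psi gamma /\ E2_mor c' c eta' psi' gamma' /\
    (forall h, eta' (eta h) = h) /\ (forall h, eta (eta' h) = h) /\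
    (forall x, psi' (psi x) = x) /\ (forall x, psi (psi' x) = x) /\
    (forall g, gamma' (gamma g) = g) /\ (forall g, gamma (gamma' g) = g).

Definition approx2 {H G : Group} (c c' : Crossed H G) : Prop :=
  exists (eta etai : H -> H) (gamma gammai : G -> G) (t : G -> H),
    is_hom H H eta /\ is_hom G G gamma /\
    (forall h, etai (eta h) = h) /\ (forall h, eta (etai h) = h) /\
    (forall g, gammai (gamma g) = g) /\ (forall g, gamma (gammai g) = g) /\
    (forall g h, cr_alpha c' g h =
       eta (gmul (gmul (t g) (cr_alpha c (gammai g) (etai h))) (ginv (t g)))) /\
    (forall g1 g2, cr_f c' g1 g2 =
       eta (gmul (gmul (gmul (t g1) (cr_alpha c (gammai g1) (t g2)))
                       (cr_f c (gammai g1) (gammai g2)))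
                 (ginv (t (gmul g1 g2))))).

Definition classes {X : Type} (R : X -> X -> Prop) : Type :=
  { P : X -> Prop | exists x, forall y, P y <-> R x y }.

Definition bijective_map {A B : Type} (F : A -> B) : Prop :=
  exists F' : B -> A, (forall a, F' (F a) = a) /\ (forall b, F (F' b) = b).

From Stdlib Require Import RelationClasses ProofIrrelevance Setoid.

(* The heart of the matter is that a morphism (eta, psi, gamma) of E_2(H,G)
   is determined by eta, gamma and its "offset" u g := first component of
   psi (1, g): every such psi has the shape  psi (h, g) = (eta h * u g, gamma g)
   (E2_mor_decomp), and multiplicativity of psi on the generators (1, g),
   (h, 1) translates into formulas expressing the action and the cocycle of
   the target through those of the source (E2_mor_alpha, E2_mor_f).
   - If psi is an isomorphism, setting t g := (eta^-1 (u (gamma^-1 g)))^-1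
     turns these formulas into exactly the data of approx_2 (iso_to_approx).
   - Conversely, approx_2 data (eta, gamma, t) define the explicit morphism
     psi (h, g) := (eta (h * t (gamma g)^-1), gamma g) (twist_map), whose
     inverse is again an E_2-morphism (E2_mor_inverse), so approx_2 implies
     isomorphism (approx_to_iso).
   Since isomorphism is an equivalence relation, so is approx_2, and two
   relations with the same graph have literally the same classes, which
   gives the bijection between the two quotients (classes_iff_bijection). *)

Section GroupLemmas.
Variable A : Group.

Lemma mul_cancel_l (x y z : A) : gmul x y = gmul x z -> y = z.
Proof.
  intro E. rewrite <- (gmul1l A y), <- (gmul1l A z), <- (gmulVl A x), <- !gmulA, E.
  reflexivity.
Qed.

Lemma mulg_left_eq (b x a : A) : gmul b x = a -> x = gmul (ginv b) a.
Proof. intro E. rewrite <- E, gmulA, gmulVl, gmul1l. reflexivity. Qed.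

Lemma inv_uniq (x y : A) : gmul x y = gone -> y = ginv x.
Proof. intro E. apply mulg_left_eq in E. rewrite E, gmul1r. reflexivity. Qed.

Lemma gmulK (a x : A) : gmul (gmul a x) (ginv x) = a.
Proof. rewrite <- gmulA, gmulVr, gmul1r. reflexivity. Qed.

Lemma gmulVK (a x : A) : gmul (gmul a (ginv x)) x = a.
Proof. rewrite <- gmulA, gmulVl, gmul1r. reflexivity. Qed.

Lemma ginv_mul (x y : A) : ginv (gmul x y) = gmul (ginv y) (ginv x).
Proof. symmetry; apply inv_uniq. rewrite gmulA, gmulK, gmulVr. reflexivity. Qed.

Lemma ginv_inv (x : A) : ginv (ginv x) = x.
Proof. symmetry; apply inv_uniq. apply gmulVl. Qed.

Lemma ginv1 : ginv (@gone A) = gone.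
Proof. symmetry; apply inv_uniq. apply gmul1l. Qed.

Lemma idem1 (x : A) : gmul x x = x -> x = gone.
Proof. intro E. apply (mul_cancel_l x). rewrite E, gmul1r. reflexivity. Qed.

End GroupLemmas.

Tactic Notation "gsimpl" := repeat progress (rewrite ?gmulA, ?gmulK, ?gmulVK,
   ?gmul1l, ?gmul1r, ?gmulVl, ?gmulVr, ?ginv_mul, ?ginv_inv, ?ginv1).
Tactic Notation "gsimpl" "in" hyp(E) := repeat progress (rewrite ?gmulA, ?gmulK,
   ?gmulVK, ?gmul1l, ?gmul1r, ?gmulVl, ?gmulVr, ?ginv_mul, ?ginv_inv, ?ginv1 in E).

Lemma hom_one (A B : Group) (phi : A -> B) : is_hom A B phi -> phi gone = gone.
Proof. intro Hp. apply idem1. rewrite <- Hp, gmul1l. reflexivity. Qed.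

Lemma hom_inv (A B : Group) (phi : A -> B) :
  is_hom A B phi -> forall x, phi (ginv x) = ginv (phi x).
Proof.
  intros Hp x. apply inv_uniq. rewrite <- Hp, gmulVr. apply hom_one; exact Hp.
Qed.

Lemma inv_morph {X Y : Type} (mX : X -> X -> X) (mY : Y -> Y -> Y)
  (phi : X -> Y) (psi : Y -> X) :
  (forall x y, phi (mX x y) = mY (phi x) (phi y)) -> (forall x, psi (phi x) = x) ->
  (forall y, phi (psi y) = y) -> forall x y, psi (mY x y) = mX (psi x) (psi y).
Proof.
  intros Hm H1 H2 x y. rewrite <- (H2 x) at 1. rewrite <- (H2 y) at 1.
  rewrite <- Hm, H1. reflexivity.
Qed.

Section CrossedSystem.
Variables (H G : Group) (c : Crossed H G).

Lemma alpha_aut g : is_aut H (cr_alpha c g).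
Proof. exact (proj1 (proj2_sig c) g). Qed.

Lemma f11 : cr_f c gone gone = gone.
Proof. exact (proj1 (proj2 (proj2_sig c))). Qed.

Lemma twisted_action g1 g2 h : cr_alpha c g1 (cr_alpha c g2 h) =
  gmul (gmul (cr_f c g1 g2) (cr_alpha c (gmul g1 g2) h)) (ginv (cr_f c g1 g2)).
Proof. exact (proj1 (proj2 (proj2 (proj2_sig c))) g1 g2 h). Qed.

Lemma cocycle g1 g2 g3 : gmul (cr_f c g1 g2) (cr_f c (gmul g1 g2) g3) =
  gmul (cr_alpha c g1 (cr_f c g2 g3)) (cr_f c g1 (gmul g2 g3)).
Proof. exact (proj2 (proj2 (proj2 (proj2_sig c))) g1 g2 g3). Qed.

Lemma alpha_mul g x y : cr_alpha c g (gmul x y) = gmul (cr_alpha c g x) (cr_alpha c g y).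
Proof. exact (proj1 (alpha_aut g) x y). Qed.

Lemma alpha_inv g x : cr_alpha c g (ginv x) = ginv (cr_alpha c g x).
Proof. apply hom_inv. exact (proj1 (alpha_aut g)). Qed.

Lemma alpha_1 g : cr_alpha c g gone = gone.
Proof. apply hom_one. exact (proj1 (alpha_aut g)). Qed.

(* (WA) at g1 = g2 = 1 says alpha 1 o alpha 1 = alpha 1; cancel one alpha 1. *)
Lemma alpha_one h : cr_alpha c gone h = h.
Proof.
  destruct (alpha_aut gone) as [_ [b [Hb _]]].
  pose proof (twisted_action gone gone h) as E.
  rewrite f11, gmul1l, ginv1, gmul1r, gmul1l in E.
  apply (f_equal b) in E. rewrite !Hb in E. exact E.
Qed.

Lemma f_g1 g : cr_f c g gone = gone.
Proof.
  pose proof (cocycle g gone gone) as E. rewrite !gmul1r, f11, alpha_1, gmul1l in E.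
  apply idem1; exact E.
Qed.

Lemma f_1g g : cr_f c gone g = gone.
Proof.
  pose proof (cocycle gone gone g) as E. rewrite !gmul1l, f11, alpha_one, gmul1l in E.
  apply idem1; symmetry; exact E.
Qed.

End CrossedSystem.

Definition mor_offset {H G : Group} (psi : H * G -> H * G) (g : G) : H :=
  fst (psi (gone, g)).

Section MorphismShape.
Variables (H G : Group) (c c' : Crossed H G).
Variables (eta : H -> H) (psi : H * G -> H * G) (gamma : G -> G).
Hypothesis M : E2_mor c c' eta psi gamma.

(* (h, g) = (h, 1) (1, g), so psi is determined by eta, gamma and the offset. *)
Lemma E2_mor_decomp h g : psi (h, g) = (gmul (eta h) (mor_offset psi g), gamma g).
Proof.
  destruct M as (_ & _ & psi_mul & psi_H & psi_G).
  assert (Esplit : (h, g) = cp_mul c (h, gone) (gone, g)).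
  { unfold cp_mul. rewrite alpha_one, f_1g, !gmul1r, gmul1l. reflexivity. }
  rewrite Esplit, psi_mul, psi_H, (surjective_pairing (psi (gone, g))), psi_G.
  unfold cp_mul, mor_offset; simpl. rewrite alpha_one, f_1g, gmul1r, gmul1l.
  reflexivity.
Qed.

(* psi on (1, g)(h, 1) = (alpha g h, g): the target action is the source
   action transported by eta and conjugated by the offset. *)
Lemma E2_mor_alpha g h : cr_alpha c' (gamma g) (eta h) =
  gmul (gmul (ginv (mor_offset psi g)) (eta (cr_alpha c g h))) (mor_offset psi g).
Proof.
  destruct M as (eta_hom & _ & psi_mul & psi_H & _).
  assert (Eprod : cp_mul c (gone, g) (h, gone) = (cr_alpha c g h, g)).
  { unfold cp_mul. rewrite f_g1, gmul1l, !gmul1r. reflexivity. }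
  pose proof (psi_mul (gone, g) (h, gone)) as E.
  rewrite Eprod, psi_H, !E2_mor_decomp in E.
  apply (f_equal fst) in E. unfold cp_mul in E; simpl in E.
  rewrite f_g1, gmul1r, (hom_one _ _ eta eta_hom), gmul1l in E.
  symmetry in E. apply mulg_left_eq in E. rewrite E, gmulA. reflexivity.
Qed.

(* psi on (1, g1)(1, g2) = (f g1 g2, g1 g2): the cocycle relation between
   source and target. *)
Lemma E2_mor_f g1 g2 :
  gmul (gmul (mor_offset psi g1) (cr_alpha c' (gamma g1) (mor_offset psi g2)))
       (cr_f c' (gamma g1) (gamma g2)) =
  gmul (eta (cr_f c g1 g2)) (mor_offset psi (gmul g1 g2)).
Proof.
  destruct M as (eta_hom & _ & psi_mul & _ & _).
  assert (Eprod : cp_mul c (gone, g1) (gone, g2) = (cr_f c g1 g2, gmul g1 g2)).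
  { unfold cp_mul. rewrite alpha_1, !gmul1l. reflexivity. }
  pose proof (psi_mul (gone, g1) (gone, g2)) as E.
  rewrite Eprod, !E2_mor_decomp in E.
  apply (f_equal fst) in E. unfold cp_mul in E; simpl in E.
  rewrite (hom_one _ _ eta eta_hom), !gmul1l in E. symmetry. exact E.
Qed.

End MorphismShape.

Lemma E2_mor_inverse (H G : Group) (c c' : Crossed H G)
  (eta etai : H -> H) (psi psi' : H * G -> H * G) (gamma gammai : G -> G) :
  E2_mor c c' eta psi gamma ->
  (forall h, etai (eta h) = h) -> (forall h, eta (etai h) = h) ->
  (forall x, psi' (psi x) = x) -> (forall x, psi (psi' x) = x) ->
  (forall g, gammai (gamma g) = g) -> (forall g, gamma (gammai g) = g) ->
  E2_mor c' c etai psi' gammai.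
Proof.
  intros (eta_hom & gamma_hom & psi_mul & psi_H & psi_G) etaK etaiK psiK psiiK gammaK gammaiK.
  split; [exact (inv_morph _ _ eta etai eta_hom etaK etaiK)|].
  split; [exact (inv_morph _ _ gamma gammai gamma_hom gammaK gammaiK)|].
  split; [exact (inv_morph _ _ psi psi' psi_mul psiK psiiK)|].
  split.
  - intro h. rewrite <- (etaiK h) at 1. rewrite <- psi_H, psiK. reflexivity.
  - intro x. rewrite <- (psiiK x) at 2. rewrite psi_G, gammaK. reflexivity.
Qed.

Section ApproxToIso.
Variables (H G : Group) (c c' : Crossed H G).
Variables (eta etai : H -> H) (gamma gammai : G -> G) (t : G -> H).
Hypotheses (eta_hom : is_hom H H eta) (gamma_hom : is_hom G G gamma).
Hypotheses (etaK : forall h, etai (eta h) = h) (etaiK : forall h, eta (etai h) = h).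
Hypotheses (gammaK : forall g, gammai (gamma g) = g)
           (gammaiK : forall g, gamma (gammai g) = g).
Hypothesis alpha_twist : forall g h, cr_alpha c' g h =
  eta (gmul (gmul (t g) (cr_alpha c (gammai g) (etai h))) (ginv (t g))).
Hypothesis f_twist : forall g1 g2, cr_f c' g1 g2 =
  eta (gmul (gmul (gmul (t g1) (cr_alpha c (gammai g1) (t g2)))
                  (cr_f c (gammai g1) (gammai g2)))
            (ginv (t (gmul g1 g2)))).

Definition twist_map (x : H * G) : H * G :=
  (eta (gmul (fst x) (ginv (t (gamma (snd x))))), gamma (snd x)).

Definition twist_map_inv (x : H * G) : H * G :=
  (gmul (etai (fst x)) (t (snd x)), gammai (snd x)).

(* Normalization of both cocycles forces t 1 = 1. *)
Lemma twist_one : t gone = gone.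
Proof.
  assert (gammai1 : gammai gone = gone).
  { rewrite <- (hom_one _ _ gamma gamma_hom) at 1. apply gammaK. }
  pose proof (f_twist gone gone) as E.
  rewrite f11, gammai1, f11, alpha_one, gmul1l, gmul1r, gmulK in E.
  apply (f_equal etai) in E. rewrite etaK in E.
  rewrite <- E, <- (hom_one _ _ eta eta_hom) at 1. apply etaK.
Qed.

Lemma twist_map_mul x y : twist_map (cp_mul c x y) = cp_mul c' (twist_map x) (twist_map y).
Proof.
  destruct x as [h1 g1], y as [h2 g2]. unfold twist_map, cp_mul; simpl.
  rewrite alpha_twist, f_twist, !gammaK, !etaK, gamma_hom. f_equal.
  rewrite <- !eta_hom. f_equal.
  rewrite alpha_mul, alpha_inv. gsimpl. reflexivity.
Qed.

Lemma twist_map_mor : E2_mor c c' eta twist_map gamma.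
Proof.
  split; [exact eta_hom|]. split; [exact gamma_hom|].
  split; [exact twist_map_mul|]. split.
  - intro h. unfold twist_map; simpl.
    rewrite (hom_one _ _ gamma gamma_hom), twist_one, ginv1, gmul1r. reflexivity.
  - intro x; reflexivity.
Qed.

Lemma twist_mapK x : twist_map_inv (twist_map x) = x.
Proof.
  destruct x as [h g]. unfold twist_map, twist_map_inv; simpl.
  rewrite etaK, gammaK, gmulVK. reflexivity.
Qed.

Lemma twist_map_invK x : twist_map (twist_map_inv x) = x.
Proof.
  destruct x as [h g]. unfold twist_map, twist_map_inv; simpl.
  rewrite gammaiK, gmulK, etaiK. reflexivity.
Qed.

End ApproxToIso.

Lemma approx_to_iso (H G : Group) (c c' : Crossed H G) : approx2 c c' -> E2_iso c c'.
Proof.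
  intros (eta & etai & gamma & gammai & t & eta_hom & gamma_hom & etaK & etaiK
          & gammaK & gammaiK & alpha_twist & f_twist).
  pose proof (twist_map_mor H G c c' eta etai gamma gammai t eta_hom gamma_hom etaK
                gammaK alpha_twist f_twist) as M.
  pose proof (twist_mapK H G eta etai gamma gammai t etaK gammaK) as psiK.
  pose proof (twist_map_invK H G eta etai gamma gammai t etaiK gammaiK) as psiiK.
  exists eta, (twist_map H G eta gamma t), gamma,
         etai, (twist_map_inv H G etai gammai t), gammai.
  split; [exact M|].
  split; [exact (E2_mor_inverse _ _ _ _ _ _ _ _ _ _ M etaK etaiK psiK psiiK gammaK gammaiK)|].
  repeat split; assumption.
Qed.

(* Conversely, an isomorphism yields approx_2 data with
   t g := (eta^-1 (offset (gamma^-1 g)))^-1. *)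
Lemma iso_to_approx (H G : Group) (c c' : Crossed H G) : E2_iso c c' -> approx2 c c'.
Proof.
  intros (eta & psi & gamma & etai & psii & gammai & M & Mi & etaK & etaiK & _ & _
          & gammaK & gammaiK).
  pose proof M as (eta_hom & gamma_hom & _).
  pose proof Mi as (_ & gammai_hom & _).
  set (w := fun g => etai (mor_offset psi g)).
  assert (offset_w : forall g, mor_offset psi g = eta (w g)).
  { intro g. unfold w. rewrite etaiK. reflexivity. }
  exists eta, etai, gamma, gammai, (fun g => ginv (w (gammai g))).
  do 6 (split; [assumption|]). split.
  - intros g h. rewrite <- (gammaiK g) at 1. rewrite <- (etaiK h) at 1.
    rewrite (E2_mor_alpha _ _ _ _ _ _ _ M), offset_w, ginv_inv.
    rewrite !eta_hom, (hom_inv _ _ _ eta_hom). reflexivity.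
  - intros g1 g2.
    set (a := gammai g1). set (b := gammai g2).
    assert (Eab : gammai (gmul g1 g2) = gmul a b) by apply gammai_hom.
    replace (cr_f c' g1 g2) with (cr_f c' (gamma a) (gamma b))
      by (unfold a, b; rewrite !gammaiK; reflexivity).
    rewrite Eab.
    pose proof (E2_mor_f _ _ _ _ _ _ _ M a b) as E.
    rewrite !offset_w, (E2_mor_alpha _ _ _ _ _ _ _ M), !offset_w in E.
    gsimpl in E. apply mulg_left_eq in E. rewrite E.
    rewrite alpha_inv, !eta_hom, !(hom_inv _ _ _ eta_hom). gsimpl. reflexivity.
Qed.

Lemma E2_mor_comp (H G : Group) (c1 c2 c3 : Crossed H G) e1 p1 g1 e2 p2 g2 :
  E2_mor c1 c2 e1 p1 g1 -> E2_mor c2 c3 e2 p2 g2 ->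
  E2_mor c1 c3 (fun x => e2 (e1 x)) (fun x => p2 (p1 x)) (fun x => g2 (g1 x)).
Proof.
  intros [A1 [B1 [C1 [D1 E1]]]] [A2 [B2 [C2 [D2 E2]]]].
  split; [intros x y; rewrite A1, A2; reflexivity|].
  split; [intros x y; rewrite B1, B2; reflexivity|].
  split; [intros x y; rewrite C1, C2; reflexivity|].
  split; [intros h; rewrite D1, D2; reflexivity|].
  intros x; rewrite E2, E1; reflexivity.
Qed.

Lemma E2_iso_equiv (H G : Group) : Equivalence (@E2_iso H G).
Proof.
  constructor.
  - intro c. exists (fun x => x), (fun x => x), (fun x => x),
                    (fun x => x), (fun x => x), (fun x => x).
    assert (Mid : E2_mor c c (fun x => x) (fun x => x) (fun x => x)).
    { repeat split; intros; reflexivity. }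
    split; [exact Mid|]. split; [exact Mid|]. repeat split.
  - intros c c' (e & p & g & e' & p' & g' & M & M' & X1 & X2 & X3 & X4 & X5 & X6).
    exists e', p', g', e, p, g. split; [exact M'|]. split; [exact M|].
    repeat split; assumption.
  - intros c1 c2 c3 (e & p & g & e' & p' & g' & M & M' & X1 & X2 & X3 & X4 & X5 & X6)
      (f & q & k & f' & q' & k' & N & N' & Y1 & Y2 & Y3 & Y4 & Y5 & Y6).
    exists (fun x => f (e x)), (fun x => q (p x)), (fun x => k (g x)),
           (fun x => e' (f' x)), (fun x => p' (q' x)), (fun x => g' (k' x)).
    split; [eapply E2_mor_comp; eassumption|].
    split; [eapply E2_mor_comp; eassumption|].
    repeat split; intros; congruence.
Qed.

Lemma equivalence_iff {X : Type} (R S : X -> X -> Prop) :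
  (forall x y, R x y <-> S x y) -> Equivalence R -> Equivalence S.
Proof.
  intros RS [Rrefl Rsym Rtrans]. constructor.
  - intro x. apply RS, Rrefl.
  - intros x y Sxy. apply RS, Rsym, RS, Sxy.
  - intros x y z Sxy Syz. apply RS. apply (Rtrans x y z); apply RS; assumption.
Qed.

Definition classes_transport {X : Type} (R S : X -> X -> Prop)
  (RS : forall x y, R x y <-> S x y) (P : classes R) : classes S :=
  exist _ (proj1_sig P)
   (match proj2_sig P with
    | ex_intro _ x Hx => ex_intro _ x (fun y => iff_trans (Hx y) (RS x y))
    end).

Lemma classes_transport_involutive {X : Type} (R S : X -> X -> Prop) RS SR (P : classes R) :
  classes_transport S R SR (classes_transport R S RS P) = P.
Proof.
  destruct P as [P pf]. unfold classes_transport; simpl. f_equal.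
  apply proof_irrelevance.
Qed.

Lemma classes_iff_bijection {X : Type} (R S : X -> X -> Prop) :
  (forall x y, R x y <-> S x y) ->
  exists F : classes R -> classes S, bijective_map F.
Proof.
  intro RS.
  assert (SR : forall x y, S x y <-> R x y) by (intros; symmetry; apply RS).
  exists (classes_transport R S RS), (classes_transport S R SR).
  split; intro; apply classes_transport_involutive.
Qed.

Theorem theorem3p6 (H G : Group) :
  Equivalence (@approx2 H G) /\
  (forall c c' : Crossed H G, approx2 c c' <-> E2_iso c c') /\
  (exists F : classes (@E2_iso H G) -> classes (@approx2 H G), bijective_map F).
Proof.
  assert (approx_iff_iso : forall c c' : Crossed H G, approx2 c c' <-> E2_iso c c').
  { intros c c'. split; [apply approx_to_iso | apply iso_to_approx]. }
  split; [|split; [exact approx_iff_iso|]].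
  - apply (equivalence_iff E2_iso); [|apply E2_iso_equiv].
    intros; symmetry; apply approx_iff_iso.
  - apply classes_iff_bijection. intros; symmetry; apply approx_iff_iso.
Qed.
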